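(* For every nonnegative integer $n$, $$\sum_{k=0}^{\infty}(-1)^k(4k+1)\,\frac{(-3n)_k\,(-4n-\tfrac16)_k\,(\tfrac12)_k}{k!\,(3n+\tfrac32)_k\,(4n+\tfrac53)_k}=\left(\frac{2^8 3^3}{7^7}\right)^n\frac{(\tfrac{11}{12})_n(\tfrac56)_n(\tfrac12)_n(\tfrac{5}{12})_n(\tfrac76)_n^2}{(\tfrac{11}{21})_n(\tfrac{23}{21})_n(\tfrac{5}{21})_n(\tfrac{17}{21})_n(\tfrac{8}{21})_n(\tfrac{20}{21})_n}.$$ (The sum is finite, since $(-3n)_k=0$ for $k>3n$.)
   Context: $(a)_j=\Gamma(a+j)/\Gamma(a)=a(a+1)\cdots(a+j-1)$ denotes the rising factorial (Pochhammer symbol), with $(a)_0=1$. *)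

From HB Require Import structures.
From mathcomp Require Import all_boot all_order all_algebra.
Set Implicit Arguments. Unset Strict Implicit. Unset Printing Implicit Defensive.
Import Order.TTheory GRing.Theory Num.Theory.
Local Open Scope ring_scope.

Definition poch (a : rat) (j : nat) : rat := \prod_(i < j) (a + i%:R).

From HB Require Import structures.
From mathcomp Require Import all_boot all_order all_algebra.
From mathcomp Require Import ring lra.
Import Order.TTheory GRing.Theory Num.Theory.
Local Open Scope ring_scope.

(* The series terminates, and its value is found in two independent steps.
   1. A WZ-style telescoping argument.  For a parameter d > 0 and m <= N put
        T_d(m, k) = (-1)^k (4k+1) (-m)_k (3/2-d)_k (1/2)_k
                    / (k! (m+3/2)_k (d)_k).
      There is an explicit certificate G_d(m, k) such that
        T_d(m+1, k) = (m+3/2)/(d+m) T_d(m, k) + G_d(m, k+1) - G_d(m, k),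
      and G_d(m, 0) = G_d(m, N+1) = 0.  Summing over k and inducting on m
      gives sum_k T_d(m, k) = (3/2)_m / (d)_m.
   2. With m = 3n and d = 4n + 5/3 the sum of the theorem is T_d(3n, .), so it
      equals (3/2)_{3n} (5/3)_{4n} / (5/3)_{7n}.  The Gauss multiplication
      formula (a)_{kn} = (k^k)^n prod_{i<k} ((a+i)/k)_n expands the three
      Pochhammer symbols into the product on the right-hand side. *)

Lemma poch0 a : poch a 0 = 1.
Proof. by rewrite /poch big_ord0. Qed.

Lemma pochS a k : poch a k.+1 = poch a k * (a + k%:R).
Proof. by rewrite /poch big_ord_recr. Qed.

Lemma poch_add a i j : poch a (i + j) = poch a i * poch (a + i%:R) j.
Proof.
elim: j => [|j IH]; first by rewrite addn0 poch0 mulr1.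
by rewrite addnS !pochS IH natrD addrA mulrA.
Qed.

Lemma poch_shift a k : a * poch (a + 1) k = poch a k * (a + k%:R).
Proof.
rewrite -pochS /poch big_ord_recl addr0; congr (_ * _); apply: eq_bigr => i _.
by rewrite /= mulrS addrA (addrC a 1) -addrA addrC.
Qed.

Lemma poch_succ a k : a != 0 -> poch (a + 1) k = poch a k * (a + k%:R) / a.
Proof. by move=> a_neq0; rewrite -poch_shift; field. Qed.

Lemma poch_gt0 a k : 0 < a -> 0 < poch a k.
Proof.
move=> a_gt0; apply: prodr_gt0 => i _.
by apply: ltr_wpDr; rewrite ?ler0n.
Qed.

Lemma poch_negz j k : (j < k)%N -> poch (- j%:R) k = 0.
Proof.
move=> ltjk; apply/eqP/prodf_eq0; exists (Ordinal ltjk) => //=.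
by rewrite addrC subrr.
Qed.

Lemma poch_mult a k n : (0 < k)%N ->
  poch a (k * n) = (k%:R ^+ k) ^+ n * \prod_(i < k) poch ((a + i%:R) / k%:R) n.
Proof.
move=> k_gt0; have kR_neq0 : k%:R != 0 :> rat by rewrite pnatr_eq0 -lt0n.
elim: n => [|n IH].
  by rewrite muln0 poch0 expr0 mul1r big1 // => i _; rewrite poch0.
have block : poch (a + (k * n)%:R) k
    = k%:R ^+ k * \prod_(i < k) ((a + i%:R) / k%:R + n%:R).
  rewrite /poch -[X in _ ^+ X]card_ord -prodr_const -big_split /=.
  by apply: eq_bigr => i _; rewrite natrM; field.
rewrite mulnS addnC poch_add IH block exprSr.
under [X in _ = _ * X]eq_bigr do rewrite pochS.
rewrite big_split /=; ring.
Qed.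

(* From now on poch is only handled through the lemmas above; keeping it
   opaque stops unification from unfolding it when matching rewrite rules. *)
Opaque poch.

(* Side conditions of field: positivity of the denominators, which are
   factorials, Pochhammer symbols and powers of positive arguments, or
   linear expressions in nonnegative quantities. *)
Ltac nonzero_side :=
  repeat (apply/andP; split); apply: lt0r_neq0;
  first [by rewrite ltr0n fact_gt0 | apply: poch_gt0; lra | apply: exprn_gt0; lra | lra].

Definition wz_term (d : rat) (m k : nat) : rat :=
  (-1) ^+ k * (4 * k%:R + 1)
     * (poch (- m%:R) k * poch (3 / 2 - d) k * poch (1 / 2) k)
     / ((k`!)%:R * poch (m%:R + 3 / 2) k * poch d k).

Definition wz_cert (d : rat) (m k : nat) : rat :=
  - ((3 / 2 + m%:R) / (d + m%:R)) * (-1) ^+ k * 2 * poch (3 / 2 - d) k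
    * poch (1 / 2) k * k%:R * (d - 1 + k%:R) * poch (- (m.+1)%:R) k
    / ((m.+1)%:R * (k`!)%:R * poch (m%:R + 3 / 2) k * poch d k).

Lemma wz_step (d : rat) m k : 0 < d ->
  wz_term d m.+1 k
  = (3 / 2 + m%:R) / (d + m%:R) * wz_term d m k + (wz_cert d m k.+1 - wz_cert d m k).
Proof.
move=> d_gt0; have m_ge0 := ler0n rat m; have k_ge0 := ler0n rat k.
have m1_neq0 : - (m.+1)%:R != 0 :> rat by rewrite oppr_eq0 pnatr_eq0.
have mq_neq0 : m%:R + 3 / 2 != 0 :> rat by apply: lt0r_neq0; lra.
have contig_num := poch_succ _ k m1_neq0.
rewrite [- _ + 1](_ : _ = - m%:R) in contig_num; last by ring.
have contig_den := poch_succ _ k mq_neq0.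
rewrite [_ + 1](_ : _ = (m.+1)%:R + 3 / 2) in contig_den; last by ring.
rewrite /wz_term /wz_cert contig_num contig_den !pochS factS natrM exprS.
field; nonzero_side.
Qed.

Lemma wz_cert_vanish (d : rat) m N :
  (m < N)%N -> wz_cert d m 0 = 0 /\ wz_cert d m N.+1 = 0.
Proof.
move=> ltmN; rewrite /wz_cert (@poch_negz m.+1 N.+1) //.
by split; rewrite !(mulr0, mul0r).
Qed.

Lemma wz_sum (d : rat) N m : 0 < d -> (m <= N)%N ->
  \sum_(k < N.+1) wz_term d m k = poch (3 / 2) m / poch d m.
Proof.
move=> d_gt0; elim: m => [|m IH] lemN.
  rewrite big_ord_recl big1 => [|k _]; last by rewrite /wz_term poch_negz // !(mul0r, mulr0).
  by rewrite /wz_term /= !poch0 expr0 fact0; field.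
have [cert0 certN] := wz_cert_vanish d _ _ lemN.
rewrite (eq_bigr _ (fun (k : 'I_N.+1) _ => wz_step d m k d_gt0)) big_split /= -mulr_sumr.
rewrite IH; last exact: ltnW.
rewrite -(big_mkord xpredT (fun k => wz_cert d m k.+1 - wz_cert d m k)).
by rewrite telescope_sumr // cert0 certN subrr addr0 !pochS invfM; ring.
Qed.

(* The three instances of the Gauss multiplication formula needed below; the
   bases of the powers are abstracted so that their numerals are never
   normalised. *)

Lemma gauss3 (y : rat) : y = 3 ^+ 3 -> forall n,
  poch (3 / 2) (3 * n) = y ^+ n * (poch (1 / 2) n * poch (5 / 6) n * poch (7 / 6) n).
Proof. by move=> -> n; rewrite poch_mult // !big_ord_recr big_ord0 /= mul1r. Qed.

Lemma gauss4 (x : rat) : x = 2 ^+ 8 -> forall n,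
  poch (5 / 3) (4 * n)
  = x ^+ n * (poch (5 / 12) n * poch (2 / 3) n * poch (11 / 12) n * poch (7 / 6) n).
Proof. by move=> -> n; rewrite poch_mult // !big_ord_recr big_ord0 /= mul1r. Qed.

Lemma gauss7 (z : rat) : z = 7 ^+ 7 -> forall n,
  poch (5 / 3) (7 * n)
  = z ^+ n * (poch (5 / 21) n * poch (8 / 21) n * poch (11 / 21) n * poch (2 / 3) n
              * poch (17 / 21) n * poch (20 / 21) n * poch (23 / 21) n).
Proof. by move=> -> n; rewrite poch_mult // !big_ord_recr big_ord0 /= mul1r. Qed.

Lemma terminating_value n (x y z : rat) : x = 2 ^+ 8 -> y = 3 ^+ 3 -> z = 7 ^+ 7 ->
  poch (3 / 2) (3 * n) / poch ((4 * n)%:R + 5 / 3) (3 * n)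
  = (x * y / z) ^+ n
     * (poch (11 / 12) n * poch (5 / 6) n * poch (1 / 2) n * poch (5 / 12) n
        * poch (7 / 6) n ^+ 2)
     / (poch (11 / 21) n * poch (23 / 21) n * poch (5 / 21) n * poch (17 / 21) n
        * poch (8 / 21) n * poch (20 / 21) n).
Proof.
move=> hx hy hz.
have x_gt0 : 0 < x by rewrite hx exprn_gt0.
have z_gt0 : 0 < z by rewrite hz exprn_gt0.
move: hx hy hz => /gauss4 gx /gauss3 gy /gauss7 gz.
have split7 : poch ((4 * n)%:R + 5 / 3) (3 * n)
    = poch (5 / 3) (7 * n) / poch (5 / 3) (4 * n).
  rewrite (_ : 7 * n = 4 * n + 3 * n)%N; last by rewrite -mulnDl.
  by rewrite poch_add (addrC (5 / 3)); field; nonzero_side.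
rewrite split7 gx gy gz expr_div_n exprMn.
by field; nonzero_side.
Qed.

Theorem theorem11 (n : nat) (N : nat) (hN : (3 * n <= N)%N) :
  \sum_(k < N.+1)
     (-1) ^+ k * (4 * k%:R + 1)
     * (poch (- (3 * n)%:R) k * poch (- (4 * n)%:R - 1 / 6) k * poch (1 / 2) k)
     / ((k`!)%:R * poch ((3 * n)%:R + 3 / 2) k * poch ((4 * n)%:R + 5 / 3) k)
  = ((2 ^+ 8 * 3 ^+ 3) / 7 ^+ 7) ^+ n
     * (poch (11 / 12) n * poch (5 / 6) n * poch (1 / 2) n * poch (5 / 12) n
        * poch (7 / 6) n ^+ 2)
     / (poch (11 / 21) n * poch (23 / 21) n * poch (5 / 21) n * poch (17 / 21) n
        * poch (8 / 21) n * poch (20 / 21) n).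
Proof.
pose d : rat := (4 * n)%:R + 5 / 3.
have d_gt0 : 0 < d by rewrite /d; have := ler0n rat (4 * n); lra.
have param : - (4 * n)%:R - 1 / 6 = 3 / 2 - d by rewrite /d; field.
under eq_bigr => k _ do rewrite param.
rewrite (wz_sum _ _ _ d_gt0 hN).
exact: terminating_value.
Qed.
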